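(* Let $X$ be a compact metric space and $f\colon X\to X$ a homeomorphism with the L-shadowing property. Then $f$ has the shadowing property and admits only finitely many chain recurrent classes.
   Context: A $\delta$-pseudo orbit is $(x_k)_{k\in\mathbb{Z}}$ with $d(f(x_k),x_{k+1})<\delta$ for all $k$; a two-sided limit pseudo orbit satisfies $d(f(x_k),x_{k+1})\to0$ as $|k|\to\infty$. $z$ $\varepsilon$-shadows $(x_k)$ if $d(f^k(z),x_k)<\varepsilon$ for all $k$, and two-sided limit shadows it if $d(f^k(z),x_k)\to0$ as $|k|\to\infty$. $f$ has the L-shadowing property if for every $\varepsilon>0$ there is $\delta>0$ such that every $\delta$-pseudo orbit that is also a two-sided limit pseudo orbit is both $\varepsilon$-shadowed and two-sided limit shadowed by one and the same point. $f$ has the shadowing property if for every $\varepsilon>0$ there is $\delta>0$ such that every $\delta$-pseudo orbit is $\varepsilon$-shadowed by some point. A point $x$ is chain recurrent if for each $\varepsilon>0$ there is a nontrivial finite $\varepsilon$-pseudo orbit from $x$ to $x$; the chain recurrent class of $x$ is the set of $y$ such that for every $\varepsilon>0$ some periodic $\varepsilon$-pseudo orbit contains both $x$ and $y$. *)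

(* A compact metric space is a
   [metricType R] (R : realType) whose full set is compact; the distance is
   [mdist]. *)
From HB Require Import structures.
From mathcomp Require Import all_boot all_order all_algebra.
From mathcomp Require Import all_classical all_reals all_analysis.
Set Implicit Arguments. Unset Strict Implicit. Unset Printing Implicit Defensive.
Import Order.TTheory GRing.Theory Num.Theory.
Local Open Scope classical_set_scope.
Local Open Scope ring_scope.

Section Dyn.
Context {R : realType} {X : metricType R}.
Implicit Types (f : X -> X) (xs : int -> X).

Definition homeomorphism f : Prop :=
  exists g : X -> X, [/\ cancel f g, cancel g f, continuous f & continuous g].

Definition is_orbit f (y : int -> X) : Prop := forall k : int, y (k + 1) = f (y k).

Definition pseudo_orbit f (delta : R) xs : Prop :=
  forall k : int, mdist (f (xs k)) (xs (k + 1)) < delta.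

Definition limit_pseudo_orbit f xs : Prop :=
  forall e : R, 0 < e -> exists N : nat, forall k : int,
    (N <= absz k)%N -> mdist (f (xs k)) (xs (k + 1)) < e.

Definition eps_shadows f (eps : R) (z : X) xs : Prop :=
  exists y, [/\ is_orbit f y, y 0 = z & forall k : int, mdist (y k) (xs k) < eps].

Definition limit_shadows f (z : X) xs : Prop :=
  exists y, [/\ is_orbit f y, y 0 = z &
    forall e : R, 0 < e -> exists N : nat, forall k : int,
      (N <= absz k)%N -> mdist (y k) (xs k) < e].

Definition L_shadowing f : Prop :=
  forall eps : R, 0 < eps -> exists2 delta : R, 0 < delta &
    forall xs, pseudo_orbit f delta xs -> limit_pseudo_orbit f xs ->
      exists z : X, eps_shadows f eps z xs /\ limit_shadows f z xs.

Definition shadowing f : Prop :=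
  forall eps : R, 0 < eps -> exists2 delta : R, 0 < delta &
    forall xs, pseudo_orbit f delta xs -> exists z : X, eps_shadows f eps z xs.

Definition chain_recurrent f (x : X) : Prop :=
  forall eps : R, 0 < eps -> exists n : nat, exists s : nat -> X,
    [/\ (0 < n)%N, s 0%N = x, s n = x &
        forall i : nat, (i < n)%N -> mdist (f (s i)) (s i.+1) < eps].

Definition chain_recurrent_set f : set X := [set x | chain_recurrent f x].

Definition periodic_pseudo_orbit f (eps : R) xs : Prop :=
  pseudo_orbit f eps xs /\
  exists p : nat, (0 < p)%N /\ forall k : int, xs (k + p%:Z) = xs k.

Definition chain_recurrent_class f (x : X) : set X :=
  [set y | forall eps : R, 0 < eps -> exists xs,
     periodic_pseudo_orbit f eps xs /\
     (exists i : int, xs i = x) /\ (exists j : int, xs j = y)].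

End Dyn.

From HB Require Import structures.
From mathcomp Require Import all_boot all_order all_algebra.
From mathcomp Require Import all_classical all_reals all_analysis.
From mathcomp Require Import finmap zify lra intdiv.
Set Implicit Arguments. Unset Strict Implicit. Unset Printing Implicit Defensive.
Import Order.TTheory GRing.Theory Num.Theory.
Local Open Scope classical_set_scope.
Local Open Scope ring_scope.

(* Shadowing: replace a delta-pseudo orbit outside [-n, n] by true orbits.  The
   result is a two-sided limit pseudo orbit, so L-shadowing gives points
   eps/2-shadowing these truncations, and by compactness and continuity of each
   f^k a cluster point of them eps-shadows the original pseudo orbit.
   Finitely many classes: if x and y are chain recurrent and d(x, y) < delta/2,
   run through ever finer cycles at x in the past and ever finer cycles at y in
   the future.  This is a delta-pseudo orbit and a two-sided limit pseudo orbit,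
   so some true orbit is asymptotic to it at both ends; following that orbit
   from near x to near y gives eps-chains from x to y for every eps.  Hence the
   chain recurrent class is constant at scale delta/2 on the chain recurrent
   set, and compactness leaves finitely many classes. *)

Section CompactMetric.
Context {R : realType} {X : metricType R}.

Lemma continuous_mdist_lt (h : X -> X) x (e : R) : continuous h -> 0 < e ->
  exists2 r : R, 0 < r & forall y, mdist x y < r -> mdist (h x) (h y) < e.
Proof.
move=> hc e0.
have near_hx := metricType_numDomainType.cvgr_dist_lt (hc x) e0.
have [r r0 hr] := (metricType_numDomainType.nbhs_mdistP x _).1 (near_hx _).
by exists r.
Qed.

Lemma compact_seq_cluster (u : nat -> X) : compact [set: X] ->
  exists p, forall r : R, 0 < r -> forall N, exists2 n, (N <= n)%N & mdist p (u n) < r.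
Proof.
move=> cpt; have [p [_ clp]] := cpt (u @ \oo) _ filterT.
exists p => r r0 N.
have tail_N : (u @ \oo) [set x | exists2 n, (N <= n)%N & x = u n].
  by apply: filterS (nbhs_infty_ge N) => n Nn; exists n.
have [_ [[n Nn ->]]] := clp _ _ tail_N (nbhsx_ballx p _ r0).
by rewrite ballEmdist; exists n.
Qed.

Lemma compact_finite_net (x0 : X) (r : R) : compact [set: X] -> 0 < r ->
  exists2 D : set X, finite_set D & forall x, exists2 a, D a & mdist a x < r.
Proof.
move=> cpt r0.
(* compact_cover is stated for pointed spaces. *)
pose Xp : ptopologicalType := HB.pack X (isPointed.Build X x0).
have cptp : compact [set: Xp] := cpt.
have [D _ coverD] : finite_subset_cover [set: X] (fun a => (ball a r)°) [set: Xp].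
  move: cptp; rewrite compact_cover; apply=> [a _|x _]; first exact: open_interior.
  by exists x => //; exact: nbhsx_ballx.
exists ([set` D] : set X) => [|x]; first exact: finite_fset.
have [a Da /interior_subset] := coverD x I.
by rewrite ballEmdist; exists a.
Qed.

Lemma finite_image_locally_constant (T : Type) (A : set X) (F : X -> T) (r : R) :
  compact [set: X] -> 0 < r ->
  (forall x y, A x -> A y -> mdist x y < r -> F x = F y) -> finite_set (F @` A).
Proof.
move=> cpt r0 Fr.
have [[x0 _]|/set0P/negP/negPn/eqP->] := pselect (A !=set0); last first.
  by rewrite image_set0; exact: finite_set0.
have [D finD netD] := compact_finite_net x0 cpt (divr_gt0 r0 (ltr0Sn _ 1)).
have /choice[pick pickP] : forall a : X, exists c : X,
    (exists2 x, A x & mdist a x < r / 2) -> A c /\ mdist a c < r / 2.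
  move=> a; have [[x Ax ax]|noAx] := pselect (exists2 x, A x & mdist a x < r / 2).
    by exists x.
  by exists a => /noAx.
apply: (@sub_finite_set _ _ ((F \o pick) @` D)); last exact: finite_image.
move=> _ [x Ax <-]; have [a Da ax] := netD x; exists a => //=.
have [Apa apa] := pickP a (ex_intro2 _ _ x Ax ax).
apply: Fr => //; rewrite metric_sym in apa.
by apply: le_lt_trans (metric_triangle _ a _) _; rewrite (splitr r) ltrD.
Qed.

End CompactMetric.

Lemma continuous_iter {T : topologicalType} (h : T -> T) n :
  continuous h -> continuous (iter n h).
Proof.
move=> hc; elim: n => [|n IH] x /=; first exact: cvg_id.
exact: continuous_comp (IH x) (hc _).
Qed.

Section Orbits.
Context {R : realType} {X : metricType R}.
Variables (f g : X -> X).
Hypotheses (fK : cancel f g) (gK : cancel g f).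

Definition zorbit (x : X) (k : int) : X :=
  match k with Posz n => iter n f x | Negz n => iter n.+1 g x end.

Lemma zorbitS x k : zorbit x (k + 1) = f (zorbit x k).
Proof.
case: k => [n|[|n]].
- by have -> : Posz n + 1 = Posz n.+1 by lia.
- have -> : Negz 0 + 1 = 0 by lia.
  by rewrite /= gK.
- have -> : Negz n.+1 + 1 = Negz n by lia.
  by rewrite /= gK.
Qed.

Lemma is_orbit_zorbit x : is_orbit f (zorbit x).
Proof. by move=> k; rewrite zorbitS. Qed.

Lemma is_orbitE y : is_orbit f y -> y =1 zorbit (y 0).
Proof.
move=> yS; have yP k : y k = g (y (k + 1)) by rewrite yS fK.
case=> n; elim: n => [|n IH].
- by [].
- have -> : Posz n.+1 = Posz n + 1 by lia.
  by rewrite yS IH zorbitS.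
- exact: yP.
- rewrite yP; have -> : Negz n.+1 + 1 = Negz n by lia.
  by rewrite IH.
Qed.

Lemma continuous_zorbit k : continuous f -> continuous g -> continuous (zorbit ^~ k).
Proof. by move=> fc gc; case: k => n; exact: continuous_iter. Qed.

Definition clamp (n : nat) (k : int) : int :=
  if k < - n%:Z then - n%:Z else if n%:Z < k then n%:Z else k.

(* Inside [-n, n] the truncation follows xs; outside it continues along the true
   orbits of x_{-n} and x_n. *)
Definition truncate (xs : int -> X) (n : nat) (k : int) : X :=
  zorbit (xs (clamp n k)) (k - clamp n k).

Lemma truncateE xs n k : (absz k <= n)%N -> truncate xs n k = xs k.
Proof.
move=> kn; have clamp_k : clamp n k = k by rewrite /clamp; repeat case: ifP => ?; lia.
by rewrite /truncate clamp_k subrr.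
Qed.

Lemma truncateS xs n k :
  (truncate xs n k = xs k /\ truncate xs n (k + 1) = xs (k + 1)) \/
  truncate xs n (k + 1) = f (truncate xs n k).
Proof.
rewrite /truncate -zorbitS.
have [[-> ->]|->] : (clamp n k = k /\ clamp n (k + 1) = k + 1) \/
                    clamp n (k + 1) = clamp n k.
  by rewrite /clamp; repeat case: ifP => ?; lia.
- by left; rewrite !subrr.
- by right; congr zorbit; lia.
Qed.

Lemma truncate_pseudo_orbit xs d n :
  pseudo_orbit f d xs -> pseudo_orbit f d (truncate xs n).
Proof.
move=> xs_d k; have [[-> ->]|->] := truncateS xs n k; first exact: xs_d.
by rewrite mdistxx; exact: le_lt_trans (mdist_ge0 _ _) (xs_d 0).
Qed.

Lemma truncate_limit_pseudo_orbit xs n : limit_pseudo_orbit f (truncate xs n).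
Proof.
move=> e e0; exists n.+1 => k kn.
rewrite /truncate (_ : clamp n (k + 1) = clamp n k); last first.
  by rewrite /clamp; repeat case: ifP => ?; lia.
by rewrite (_ : k + 1 - _ = k - clamp n k + 1) ?zorbitS ?mdistxx //; lia.
Qed.

Lemma L_shadowing_shadowing : compact [set: X] -> continuous f -> continuous g ->
  L_shadowing f -> shadowing f.
Proof.
move=> cpt fc gc Lsh eps eps0.
have eps2 : 0 < eps / 2 by rewrite divr_gt0.
have [d d0 Lsh_d] := Lsh _ eps2.
exists d => // xs xs_d.
have /choice[z zP] n : exists z, eps_shadows f (eps / 2) z (truncate xs n).
  have [z [zP _]] := Lsh_d _ (truncate_pseudo_orbit n xs_d) (truncate_limit_pseudo_orbit xs n).
  by exists z.
have [p pP] := compact_seq_cluster z cpt.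
exists p, (zorbit p); split => // [|k]; first exact: is_orbit_zorbit.
have [r r0 rP] := continuous_mdist_lt p (continuous_zorbit (k:=k) fc gc) eps2.
have [n kn pzn] := pP r r0 (absz k).
have [y [yS y0 yP]] := zP n.
have := yP k; rewrite is_orbitE // y0 truncateE // => zn_xs.
apply: le_lt_trans (metric_triangle _ (zorbit (z n) k) _) _.
by rewrite (splitr eps) ltrD // rP.
Qed.

End Orbits.

Lemma absz_modzS (k : int) (n : nat) : (0 < n)%N ->
  absz ((k + 1) %% n)%Z = ((absz (k %% n)%Z).+1 %% n)%N.
Proof.
move=> n0; rewrite -modzDml -[(k %% n)%Z]gez0_abs ?modz_ge0 //; last by lia.
by rewrite -[1]/(Posz 1) -PoszD addn1 modz_nat.
Qed.

Section Steps.
Context {R : numDomainType} {T : Type}.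
Variable err : T -> T -> R.

Definition small_steps (e : R) (n : nat) (s : nat -> T) :=
  forall i, (i < n)%N -> err (s i) (s i.+1) < e.

Definition cat_walk (n : nat) (s t : nat -> T) (i : nat) : T :=
  if (i <= n)%N then s i else t (i - n)%N.

Lemma small_steps_cat e n m s t : s n = t 0%N ->
  small_steps e n s -> small_steps e m t -> small_steps e (n + m) (cat_walk n s t).
Proof.
move=> snt s_e t_e i im; rewrite /cat_walk.
have [ltin|leni] := ltnP i n; first by rewrite ltnW //; exact: s_e.
have -> : (if (i <= n)%N then s i else t (i - n)%N) = t (i - n)%N.
  case: ifP => // ?; have -> : i = n by lia.
  by rewrite subnn snt.
by rewrite subSn //; apply: t_e; lia.
Qed.

End Steps.

Section Chains.
Context {R : realType} {X : metricType R}.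
Variable f : X -> X.

Local Notation f_steps := (small_steps (fun a b => mdist (f a) b)).

Definition chain (e : R) (a b : X) :=
  exists n s, [/\ (0 < n)%N, s 0%N = a, s n = b & f_steps e n s].

Lemma chain_trans e a b c : chain e a b -> chain e b c -> chain e a c.
Proof.
move=> [n [s [n0 s0 sn s_e]]] [m [t [m0 t0 tm t_e]]].
exists (n + m)%N, (cat_walk n s t); split.
- lia.
- by rewrite /cat_walk leq0n.
- by rewrite /cat_walk addKn; case: ifP => //; lia.
- by apply: small_steps_cat => //; rewrite sn t0.
Qed.

Lemma periodic_pseudo_orbit_chain e xs i j :
  periodic_pseudo_orbit f e xs -> chain e (xs i) (xs j).
Proof.
move=> [xs_e [p [p0 xsp]]].
have xsP t k : xs (k + (p * t)%N%:Z) = xs k.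
  elim: t k => [|t IH] k; first by rewrite muln0 addr0.
  by rewrite mulnSr PoszD addrA xsp IH.
pose q := (p * (absz (j - i)).+1)%N.
have qP : ((absz (j - i)).+1 <= q)%N by rewrite leq_pmull.
exists (absz (j - i + q%:Z)), (fun l => xs (i + l%:Z)); split.
- lia.
- by rewrite addr0.
- have -> : i + (absz (j - i + q%:Z))%:Z = j + q%:Z by lia.
  exact: xsP.
- move=> l _; have -> : i + l.+1%:Z = i + l%:Z + 1 by lia.
  exact: xs_e.
Qed.

Lemma cycle_periodic_pseudo_orbit e n s : (0 < n)%N -> s n = s 0%N ->
  f_steps e n s -> periodic_pseudo_orbit f e (fun k => s (absz (k %% n)%Z)).
Proof.
move=> n0 sn s_e; split; last by exists n; split => // k; rewrite modzDr.
move=> k; rewrite absz_modzS //.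
have kn : (absz (k %% n)%Z < n)%N by have := ltz_pmod k (d := n); lia.
have [ltSn|leSn] := ltnP (absz (k %% n)%Z).+1 n; first by rewrite modn_small //; exact: s_e.
have eqSn : (absz (k %% n)%Z).+1 = n by lia.
by rewrite eqSn modnn; have := s_e _ kn; rewrite eqSn sn.
Qed.

Lemma chain_recurrent_classP a b : chain_recurrent_class f a b <->
  forall e, 0 < e -> chain e a b /\ chain e b a.
Proof.
split=> [cl_ab e e0|chains e e0].
  have [xs [xs_e [[i <-] [j <-]]]] := cl_ab e e0.
  by split; exact: periodic_pseudo_orbit_chain xs_e.
have [[n [s [n0 s0 sn s_e]]] [m [t [m0 t0 tm t_e]]]] := chains e e0.
pose c := cat_walk n s t.
have c0 : c 0%N = a by rewrite /c /cat_walk leq0n.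
have cn : c n = b by rewrite /c /cat_walk leqnn.
have cnm : c (n + m)%N = c 0%N by rewrite c0 /c /cat_walk addKn; case: ifP => //; lia.
have c_e : f_steps e (n + m) c by apply: small_steps_cat => //; rewrite sn t0.
exists (fun k => c (absz (k %% (n + m)%N)%Z)); split.
  by apply: cycle_periodic_pseudo_orbit => //; lia.
split; first by exists 0; rewrite mod0z.
by exists n; rewrite modz_small //; lia.
Qed.

Lemma chain_recurrent_class_eq a b :
  (forall e, 0 < e -> chain e a b /\ chain e b a) ->
  chain_recurrent_class f a = chain_recurrent_class f b.
Proof.
have sub u v : (forall e, 0 < e -> chain e u v /\ chain e v u) ->
    chain_recurrent_class f u `<=` chain_recurrent_class f v.
  move=> uv z /chain_recurrent_classP uz; apply/chain_recurrent_classP => e e0.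
  have [[u_v v_u] [u_z z_u]] := (uv e e0, uz e e0).
  by split; [exact: chain_trans v_u u_z | exact: chain_trans z_u u_v].
move=> ab; apply/seteqP; split; apply: sub => // e e0.
by have [] := ab e e0.
Qed.

(* The chain x, w a, w (a + 1), ..., w (b - 1), y. *)
Lemma chain_along_orbit e w (a b : int) x y : is_orbit f w -> a < b ->
  mdist (f x) (w a) < e -> mdist (w b) y < e -> chain e x y.
Proof.
move=> wS ab xa by_; pose n := (absz (b - a)).+1.
exists n, (fun i => if i == 0%N then x else if i == n then y else w (a + i%:Z - 1)).
split=> //; first by rewrite eqxx.
move=> [_|i ilt] /=.
  have -> : (1 == n) = false by lia.
  by rewrite addrK.
have -> : (i.+1 == n) = false by lia.
have e_w : w (a + i.+2%:Z - 1) = f (w (a + i.+1%:Z - 1)) by rewrite -wS; congr w; lia.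
case: eqP => [iSn|_]; last by rewrite e_w mdistxx; exact: le_lt_trans (mdist_ge0 _ _) xa.
by rewrite -e_w; have -> : a + i.+2%:Z - 1 = b by rewrite /n in iSn; lia.
Qed.

End Chains.

(* Position p in the concatenation of blocks of lengths L 0, L 1, ... is
   offset o of block m, where block_pos L p = (m, o). *)
Fixpoint block_pos (L : nat -> nat) (p : nat) : nat * nat :=
  if p is p'.+1 then
    let: (m, o) := block_pos L p' in if (o.+1 < L m)%N then (m, o.+1) else (m.+1, 0%N)
  else (0%N, 0%N).

Fixpoint block_start (L : nat -> nat) (m : nat) : nat :=
  if m is m'.+1 then (block_start L m' + L m')%N else 0%N.

Section Blocks.
Variable L : nat -> nat.
Hypothesis L_gt0 : forall m, (0 < L m)%N.

Lemma block_pos_lt p : ((block_pos L p).2 < L (block_pos L p).1)%N.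
Proof.
elim: p => [|p IH] /=; first exact: L_gt0.
by case: (block_pos L p) IH => m o /= IH; case: ifP.
Qed.

Lemma block_pos_start m : block_pos L (block_start L m) = (m, 0%N).
Proof.
elim: m => [//|m IH].
have in_block o : (o < L m)%N -> block_pos L (block_start L m + o) = (m, o).
  elim: o => [|o IHo] lto; first by rewrite addn0.
  by rewrite addnS /= IHo ?lto //; lia.
rewrite /= -(prednK (L_gt0 m)) addnS /= in_block; last by have := L_gt0 m; lia.
by rewrite prednK ?ltnn.
Qed.

Lemma block_start_ge m : (m <= block_start L m)%N.
Proof. by elim: m => [//|m IH] /=; have := L_gt0 m; lia. Qed.

Lemma block_pos_large M p : (block_start L M <= p)%N -> (M <= (block_pos L p).1)%N.
Proof.
move=> Mp; rewrite -(subnKC Mp).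
elim: (p - _)%N => [|q IH]; first by rewrite addn0 block_pos_start.
rewrite addnS /=; case: (block_pos L _) IH => m o /= IH.
by case: ifP => _ /=; lia.
Qed.

End Blocks.

Section Walks.
Context {R : realType} {T : Type}.
Variables (err : T -> T -> R) (z : T).

Hypothesis cycles : forall e, 0 < e ->
  exists n s, [/\ (0 < n)%N, s 0%N = z, s n = z & small_steps err e n s].

(* The walk runs through cycles at z with steps smaller than d / (m + 1),
   m = 0, 1, 2, ... *)
Lemma walk_of_cycles (d : R) : 0 < d ->
  exists u : nat -> T, [/\ u 0%N = z, forall p, err (u p) (u p.+1) < d,
    forall e, 0 < e -> exists N, forall p, (N <= p)%N -> err (u p) (u p.+1) < e &
    forall N, exists2 p, (N <= p)%N & u p = z].
Proof.
move=> d0; pose r m : R := d / m.+1%:R.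
have r_gt0 m : 0 < r m by rewrite divr_gt0.
have r_le m : r m <= d by rewrite ler_pdivrMr // ler_peMr ?ler1n // ltW.
have /choice[Lc LcP] m : exists Lc : nat * (nat -> T),
    [/\ (0 < Lc.1)%N, Lc.2 0%N = z, Lc.2 Lc.1 = z & small_steps err (r m) Lc.1 Lc.2].
  by have [n [s sP]] := cycles (r_gt0 m); exists (n, s).
pose L m := (Lc m).1; pose c m := (Lc m).2.
have L_gt0 m : (0 < L m)%N by case: (LcP m).
have c0 m : c m 0%N = z by case: (LcP m).
have cL m : c m (L m) = z by case: (LcP m).
pose u p := c (block_pos L p).1 (block_pos L p).2.
have u_r p : err (u p) (u p.+1) < r (block_pos L p).1.
  rewrite /u /=; have := block_pos_lt L_gt0 p.
  case: (block_pos L p) => m o /= lto; have [_ _ _ c_r] := LcP m.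
  case: ifP => [ltSo|geSo]; first exact: c_r.
  have Lo : L m = o.+1 by lia.
  by rewrite c0 -(cL m) Lo; exact: c_r.
exists u; split=> [|p|e e0|N].
- exact: c0.
- exact: lt_le_trans (u_r p) (r_le _).
- have [M MP] : exists M : nat, d / e < M%:R.
    by exists (Num.bound (d / e)); exact: archi_boundP (divr_ge0 (ltW d0) (ltW e0)).
  exists (block_start L M) => p /(block_pos_large L_gt0) Mp.
  apply: lt_trans (u_r p) _; rewrite ltr_pdivrMr // -ltr_pdivrMl //.
  by rewrite mulrC; apply: lt_le_trans MP _; rewrite ler_nat; lia.
- exists (block_start L N); first exact: block_start_ge.
  by rewrite /u block_pos_start.
Qed.

End Walks.

Section Bridge.
Context {R : realType} {X : metricType R}.
Variable f : X -> X.

(* bridge ux uy (- p) = ux p for p > 0 and bridge ux uy p = uy p for p >= 0. *)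
Definition bridge (ux uy : nat -> X) (k : int) : X :=
  match k with Posz p => uy p | Negz p => ux p.+1 end.

Lemma bridge_pseudo_orbit d ux uy : mdist (ux 0%N) (uy 0%N) < d / 2 ->
  (forall p, mdist (f (ux p.+1)) (ux p) < d / 2) ->
  (forall p, mdist (f (uy p)) (uy p.+1) < d / 2) ->
  pseudo_orbit f d (bridge ux uy).
Proof.
move=> xy ux_d uy_d; have d0 : 0 < d by have := mdist_ge0 (ux 0%N) (uy 0%N); lra.
case=> [p|[|p]].
- have -> : Posz p + 1 = Posz p.+1 by lia.
  by have := uy_d p; lra.
- have -> : Negz 0 + 1 = 0 by lia.
  apply: le_lt_trans (metric_triangle _ (ux 0%N) _) _.
  by have := ux_d 0%N; lra.
- have -> : Negz p.+1 + 1 = Negz p by lia.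
  by have := ux_d p.+1; lra.
Qed.

Lemma bridge_limit_pseudo_orbit ux uy :
  (forall e, 0 < e -> exists N, forall p, (N <= p)%N -> mdist (f (ux p.+1)) (ux p) < e) ->
  (forall e, 0 < e -> exists N, forall p, (N <= p)%N -> mdist (f (uy p)) (uy p.+1) < e) ->
  limit_pseudo_orbit f (bridge ux uy).
Proof.
move=> ux_lim uy_lim e e0.
have [[Nx NxP] [Ny NyP]] := (ux_lim e e0, uy_lim e e0).
exists (maxn Nx Ny).+2; case=> [p|[|p]] kN.
- have -> : Posz p + 1 = Posz p.+1 by lia.
  by apply: NyP; lia.
- lia.
- have -> : Negz p.+1 + 1 = Negz p by lia.
  by apply: NxP; lia.
Qed.

Lemma chain_recurrent_rev x : chain_recurrent f x -> forall e, 0 < e ->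
  exists n s, [/\ (0 < n)%N, s 0%N = x, s n = x &
                  small_steps (fun a b => mdist (f b) a) e n s].
Proof.
move=> crx e e0; have [n [s [n0 s0 sn s_e]]] := crx e e0.
exists n, (fun i => s (n - i)%N); split; rewrite ?subn0 ?subnn //.
move=> i ltin; have -> : (n - i = (n - i.+1).+1)%N by lia.
by apply: s_e; lia.
Qed.

Lemma chain_recurrent_near_chain (d : R) x y : continuous f ->
  (forall xs, pseudo_orbit f d xs -> limit_pseudo_orbit f xs ->
     exists z, limit_shadows f z xs) ->
  chain_recurrent f x -> chain_recurrent f y -> mdist x y < d / 2 ->
  forall e, 0 < e -> chain f e x y.
Proof.
move=> fc shadow crx cry xy e e0.
have d2 : 0 < d / 2 by exact: le_lt_trans (mdist_ge0 _ _) xy.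
have [ux [ux0 ux_d ux_lim ux_x]] := walk_of_cycles (chain_recurrent_rev crx) d2.
have [uy [uy0 uy_d uy_lim uy_y]] := walk_of_cycles (err := fun a b => mdist (f a) b) cry d2.
have u0_near : mdist (ux 0%N) (uy 0%N) < d / 2 by rewrite ux0 uy0.
have [_ [w [wS _ w_xs]]] := shadow (bridge ux uy)
  (bridge_pseudo_orbit u0_near ux_d uy_d) (bridge_limit_pseudo_orbit ux_lim uy_lim).
have [eta eta0 etaP] := continuous_mdist_lt x fc e0.
have [[N1 N1P] [N2 N2P]] := (w_xs eta eta0, w_xs e e0).
have [p pN ux_p] := ux_x (maxn N1 N2).+1.
have [q qN uy_q] := uy_y (maxn N1 N2).+1.
apply: (@chain_along_orbit _ _ f e w (Negz p.-1 + 1) q) => //; first by lia.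
  have bx : bridge ux uy (Negz p.-1) = x by rewrite /= prednK ?ux_p //; lia.
  rewrite wS; apply: etaP; rewrite -{1}bx metric_sym.
  by apply: N1P => /=; lia.
by rewrite -uy_q; apply: (N2P q); lia.
Qed.

End Bridge.

Unset Implicit Arguments.
Theorem proposition3p1 (R : realType) (X : metricType R) (f : X -> X) :
  compact [set: X] -> homeomorphism f -> L_shadowing f ->
  shadowing f /\
  finite_set [set chain_recurrent_class f x | x in chain_recurrent_set f].
Proof.
move=> cpt [g [fK gK fc gc]] Lsh.
split; first exact: L_shadowing_shadowing fK gK cpt fc gc Lsh.
have [d d0 Lsh_d] := Lsh 1 ltr01.
have shadow xs : pseudo_orbit f d xs -> limit_pseudo_orbit f xs ->
    exists z, limit_shadows f z xs.
  by move=> xs_d xs_lim; have [z [_ zP]] := Lsh_d xs xs_d xs_lim; exists z.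
apply: (finite_image_locally_constant cpt (divr_gt0 d0 (ltr0Sn _ 1))).
move=> x y crx cry xy; apply: chain_recurrent_class_eq => e e0; split.
  exact: chain_recurrent_near_chain fc shadow crx cry xy e e0.
by apply: chain_recurrent_near_chain fc shadow cry crx _ e e0; rewrite metric_sym.
Qed.
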